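(* Any quantum algorithm which estimates the distances of a metric space of $n$ points (given by oracle access to the distances) within a constant approximation factor has query complexity at least $\Omega(n^{3/2})$.
   Context: Estimating within approximation factor $\alpha$ means outputting an $n\times n$ matrix $A$ with $d(p_i,p_j)\le A[i][j]\le \alpha\,d(p_i,p_j)$ for all $i,j$, where the distances are available only via an oracle returning $d(p_i,p_j)$ on input $(i,j)$. *)

From HB Require Import structures.
From mathcomp Require Import all_boot all_order all_algebra.
From mathcomp Require Import complex.
From mathcomp Require Import boolp.
From mathcomp Require Import reals Rstruct.

Set Implicit Arguments.
Unset Strict Implicit.
Unset Printing Implicit Defensive.

Import Order.TTheory GRing.Theory Num.Theory.
Local Open Scope ring_scope.

Notation RR := Rdefinitions.R.
Notation CC := (complex RR).

Definition is_metric (n M : nat) (d : 'I_n -> 'I_n -> 'I_M.+1) : Prop :=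
  (forall i j, (nat_of_ord (d i j) == 0%N) = (i == j)) /\
  (forall i j, d i j = d j i) /\
  (forall i j k, (nat_of_ord (d i k) <= nat_of_ord (d i j) + nat_of_ord (d j k))%N).

Definition approximates (n M : nat) (alpha : RR)
    (d : 'I_n -> 'I_n -> 'I_M.+1) (A : 'M[RR]_n) : Prop :=
  forall i j : 'I_n,
    ((d i j : nat)%:R <= A i j) /\ (A i j <= alpha * (d i j : nat)%:R).

(* Quantum query algorithms (standard query model).
   Computational basis of the state space: query register (i,j),
   answer register b in Z_(M+1), workspace w in 'I_W.                    *)
Definition basis (n M W : nat) : finType :=
  ('I_n * 'I_n * 'I_M.+1 * 'I_W)%type.

(* Operators are given by their matrix entries  U s t = <s|U|t>. *)
Definition operator (S : finType) := S -> S -> CC.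
Definition state (S : finType) := S -> CC.

Definition apply_op (S : finType) (U : operator S) (psi : state S) : state S :=
  fun s => \sum_(t : S) U s t * psi t.

Definition unitary (S : finType) (U : operator S) : Prop :=
  forall s t : S, \sum_(u : S) (U u s)^* * U u t = (s == t)%:R.

(* The (standard, phase-free) oracle for distance d:
   |i,j,b,w>  |->  |i,j,b + d(i,j) mod (M+1), w>. *)
Definition oracle_map (n M W : nat) (d : 'I_n -> 'I_n -> 'I_M.+1)
    (s : basis n M W) : basis n M W :=
  let: (i, j, b, w) := s in (i, j, (b + d i j)%R, w).

Definition oracle (n M W : nat) (d : 'I_n -> 'I_n -> 'I_M.+1)
    : operator (basis n M W) :=
  fun s t => (s == oracle_map d t)%:R.

(* A T-query algorithm: initial basis state, unitaries U_0, ..., U_T,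
   and a decoding of the final computational-basis measurement outcome
   into an n x n real matrix (the output estimate). *)
Record query_algorithm (n M W T : nat) := QueryAlgorithm {
  qa_init : basis n M W;
  qa_U : nat -> operator (basis n M W);
  qa_unitary : forall k, (k <= T)%N -> unitary (qa_U k);
  qa_out : basis n M W -> 'M[RR]_n
}.

Fixpoint run_state (n M W : nat) (U : nat -> operator (basis n M W))
    (d : 'I_n -> 'I_n -> 'I_M.+1) (init : basis n M W) (k : nat)
    : state (basis n M W) :=
  match k with
  | 0 => apply_op (U 0%N) (fun s => (s == init)%:R)
  | k'.+1 => apply_op (U k) (apply_op (oracle d) (run_state U d init k'))
  end.

Definition final_state (n M W T : nat) (A : query_algorithm n M W T)
    (d : 'I_n -> 'I_n -> 'I_M.+1) : state (basis n M W) :=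
  run_state (qa_U A) d (qa_init A) T.

Definition sqmod (z : CC) : RR := (complex.Re z) ^+ 2 + (complex.Im z) ^+ 2.

Definition prob_output (n M W T : nat) (A : query_algorithm n M W T)
    (d : 'I_n -> 'I_n -> 'I_M.+1) (P : 'M[RR]_n -> bool) : RR :=
  \sum_(s : basis n M W | P (qa_out A s)) sqmod (final_state A d s).

Definition estimates_within (n M W T : nat) (alpha : RR)
    (A : query_algorithm n M W T) : Prop :=
  forall d : 'I_n -> 'I_n -> 'I_M.+1, is_metric d ->
    prob_output A d (fun X => `[< approximates alpha d X >]) >= 2%:R / 3%:R.

(* Ambainis' adversary method.  Split the points into two halves of size h = n/2 and, for
   a matching x between them, let d_x put the matched pairs at distance 1 and all other
   pairs at distance M > alpha; as matching edges share no endpoint this is a metric, and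
   an alpha-approximation of d_x determines x.  Relate each matching x with s = h/2 edges
   to each of its extensions y by one edge: x has at least (h - s)^2 such y, y has s + 1
   such x, and a single query (i, j) distinguishes x from at most one related y (and y
   from at most one related x).  The sum of the overlaps |<psi_x, psi_y>| over related
   pairs starts at |R|, must end below 19/20 |R|, and one query decreases it by at most
   c |X| + |Y| / c for every c > 0, where X and Y are the two sides of R; balancing c
   gives T >= sqrt((h - s)^2 (s + 1)) / 40 = Omega(n^(3/2)). *)

From mathcomp Require Import all_boot all_order all_algebra.
From mathcomp Require Import complex reals Rstruct.
From mathcomp Require Import boolp.
From mathcomp Require Import ring lra zify.

Set Implicit Arguments.
Unset Strict Implicit.
Unset Printing Implicit Defensive.

Import Order.TTheory GRing.Theory Num.Theory.
Local Open Scope ring_scope.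

(* [Rcomplex] carries the real-valued modulus as its normed-module norm. *)
Definition modc (z : CC) : RR := `|z : Rcomplex RR|.

Lemma sqmod_ge0 (z : CC) : 0 <= sqmod z.
Proof. by rewrite addr_ge0 ?sqr_ge0. Qed.

Lemma modcE (z : CC) : modc z = Normc.normc z.
Proof. by []. Qed.

Lemma modc_sqr (z : CC) : modc z ^+ 2 = sqmod z.
Proof. by rewrite modcE; case: z => a b /=; rewrite sqr_sqrtr // addr_ge0 ?sqr_ge0. Qed.

Lemma modcM (z w : CC) : modc (z * w) = modc z * modc w.
Proof. exact: Normc.normcM. Qed.

Lemma modcJ (z : CC) : modc z^* = modc z.
Proof. by rewrite !modcE; case: z => a b /=; rewrite sqrrN. Qed.

Lemma modc1 : modc 1 = 1.
Proof. exact: Normc.normc1. Qed.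

Lemma modc_sum (I : finType) (P : pred I) (F : I -> CC) :
  modc (\sum_(i | P i) F i) <= \sum_(i | P i) modc (F i).
Proof. exact: ler_norm_sum. Qed.

Lemma modc_le_dist (a b : CC) : modc b <= modc a + modc (a - b).
Proof. by rewrite /modc -{1}(subKr a b) ler_normB. Qed.

Lemma mulJc (z : CC) : z^* * z = (sqmod z)%:C%C.
Proof. by rewrite mulrC -sqr_normc -add_Re2_Im2. Qed.

Lemma mul_le_amgm (R : realFieldType) (a b c : R) :
  0 < c -> a * b <= (c * a ^+ 2 + c^-1 * b ^+ 2) / 2%:R.
Proof.
move=> c_gt0; have : 0 <= c^-1 * (c * a - b) ^+ 2 by rewrite mulr_ge0 ?sqr_ge0 ?invr_ge0 ?ltW.
have -> : c^-1 * (c * a - b) ^+ 2 = c * a ^+ 2 - 2%:R * (a * b) + c^-1 * b ^+ 2.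
  by field; rewrite gt_eqF.
lra.
Qed.

Lemma modcJM_le (c : RR) (z w : CC) :
  0 < c -> modc (z^* * w) <= (c * sqmod z + c^-1 * sqmod w) / 2%:R.
Proof. by move=> c_gt0; rewrite modcM modcJ -!modc_sqr mul_le_amgm. Qed.

Section States.
Variable S : finType.
Implicit Types (psi phi : state S) (P G : pred S).

Definition dotp psi phi : CC := \sum_s (psi s)^* * phi s.

Definition mass P psi : RR := \sum_(s | P s) sqmod (psi s).

Lemma mass_ge0 P psi : 0 <= mass P psi.
Proof. by apply: sumr_ge0 => s _; exact: sqmod_ge0. Qed.

Lemma mass_sub P G psi : (forall s, P s -> G s) -> mass P psi <= mass G psi.
Proof.
move=> PG; rewrite /mass [X in X <= _]big_mkcond [X in _ <= X]big_mkcond /=.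
apply: ler_sum => s _; case: ifP => [/PG -> //|_]; case: ifP => // _; exact: sqmod_ge0.
Qed.

Lemma mass_predC P psi : mass predT psi = mass P psi + mass (predC P) psi.
Proof. exact: bigID. Qed.

Lemma dotp_self psi : dotp psi psi = (mass predT psi)%:C%C.
Proof. by rewrite rmorph_sum; apply: eq_bigr => s _; rewrite mulJc. Qed.

Lemma dotp_unitary (U : operator S) : unitary U ->
  forall psi phi, dotp (apply_op U psi) (apply_op U phi) = dotp psi phi.
Proof.
move=> U_unitary psi phi; rewrite /dotp /apply_op.
transitivity (\sum_s \sum_t \sum_u (psi t)^* * phi u * ((U s t)^* * U s u)).
  apply: eq_bigr => s _; rewrite rmorph_sum mulr_suml; apply: eq_bigr => t _.
  by rewrite mulr_sumr; apply: eq_bigr => u _; rewrite rmorphM; ring.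
rewrite exchange_big; apply: eq_bigr => t _; rewrite exchange_big /=.
under eq_bigr do rewrite -mulr_sumr U_unitary.
rewrite (bigD1 t) //= eqxx mulr1 big1 ?addr0 // => u /negbTE.
by rewrite eq_sym => ->; rewrite mulr0.
Qed.

Lemma sum_mass_disjoint_le (J : finType) (Q : pred J) (D : J -> pred S) psi :
  (forall s j1 j2, Q j1 -> Q j2 -> D j1 s -> D j2 s -> j1 = j2) ->
  \sum_(j | Q j) mass (D j) psi <= mass predT psi.
Proof.
move=> D_uniq; rewrite /mass; under eq_bigr do rewrite big_mkcond /=.
rewrite exchange_big /=; apply: ler_sum => s _.
have [j0 /andP[Qj0 Dj0] | none] := pickP (fun j => Q j && D j s).
  rewrite (bigD1 j0) //= Dj0 big1 ?addr0 // => j /andP[Qj ne].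
  by case: ifP => // Djs; move: ne; rewrite (D_uniq s j j0) ?eqxx.
rewrite big1 ?sqmod_ge0 // => j Qj.
by case: ifP => // Djs; move: (none j); rewrite Qj Djs.
Qed.

Lemma sum_mass_disjoint_exists_le (J : finType) (Q : pred J) (D : J -> pred S) psi :
  mass predT psi = 1 ->
  (forall s j1 j2, Q j1 -> Q j2 -> D j1 s -> D j2 s -> j1 = j2) ->
  \sum_(j | Q j) mass (D j) psi <= [exists j, Q j]%:R.
Proof.
move=> psi1 D_uniq; case: (boolP [exists j, Q j]) => [_ | /existsPn noQ].
  by apply: le_trans (sum_mass_disjoint_le psi D_uniq) _; rewrite psi1.
by rewrite big_pred0 // => j; apply/negbTE/noQ.
Qed.

Lemma dotp_separated_le G psi phi :
  mass predT psi = 1 -> mass predT phi = 1 ->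
  2%:R / 3%:R <= mass G psi -> 2%:R / 3%:R <= mass (predC G) phi ->
  modc (dotp psi phi) <= 19%:R / 20%:R.
Proof.
(* AM-GM termwise, with weight [u] on [G] and [u^-1] off [G]; for [u = 7/10] the bound
   is [0.7 + 0.36 r], where [r <= 2/3] is the mass lying on the "wrong" side. *)
move=> psi1 phi1 psiG phiG; pose u : RR := 7%:R / 10%:R.
have u_gt0 : 0 < u by rewrite divr_gt0 ?ltr0n.
have uV : u^-1 = 10%:R / 7%:R by rewrite invf_div.
apply: le_trans (@modc_sum _ _ _) _; rewrite (bigID G) /=.
apply: (@le_trans _ _ ((u * mass G psi + u^-1 * mass G phi) / 2%:R +
                       (u^-1 * mass (predC G) psi + u * mass (predC G) phi) / 2%:R)).
  rewrite /mass !mulr_sumr -!big_split /= !mulr_suml; apply: lerD; apply: ler_sum => s _.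
    exact: modcJM_le.
  by have := @modcJM_le u^-1 (psi s) (phi s); rewrite invrK invr_gt0; apply.
have := mass_predC G psi; have := mass_predC G phi.
have := mass_ge0 (predC G) psi; have := mass_ge0 G phi.
rewrite psi1 phi1 uV /u; lra.
Qed.

End States.

Section Oracle.
Variables n M W : nat.
Local Notation S := (basis n M W).
Local Notation input := ('I_n -> 'I_n -> 'I_M.+1).
Implicit Types (x y d : input) (psi phi : state S).

Definition oracle_inv d (s : S) : S :=
  let: (i, j, b, w) := s in (i, j, (b - d i j)%R, w).

Lemma oracle_mapK d : cancel (oracle_map d) (oracle_inv d).
Proof. by case=> [[[i j] b] w] /=; rewrite addrK. Qed.

Lemma oracle_invK d : cancel (oracle_inv d) (oracle_map d).
Proof. by case=> [[[i j] b] w] /=; rewrite subrK. Qed.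

Lemma oracle_unitary d : unitary (@oracle n M W d).
Proof.
move=> s t; rewrite /oracle (bigD1 (oracle_map d s)) //= eqxx big1 ?addr0.
  by rewrite conjC_nat mul1r (inj_eq (can_inj (oracle_mapK d))).
by move=> u /negbTE ->; rewrite conjC_nat mul0r.
Qed.

Lemma apply_oracle d psi s : apply_op (oracle d) psi s = psi (oracle_inv d s).
Proof.
rewrite /apply_op /oracle (bigD1 (oracle_inv d s)) //= oracle_invK eqxx mul1r.
rewrite big1 ?addr0 // => t t_neq; case: eqP => [s_eq|]; last by rewrite mul0r.
by move: t_neq; rewrite s_eq oracle_mapK eqxx.
Qed.

Definition disagree x y (s : S) : bool := let: (i, j, _, _) := s in x i j != y i j.

Definition oracle_shift x y (s : S) : S := oracle_inv y (oracle_map x s).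

Lemma oracle_shift_id x y s : ~~ disagree x y s -> oracle_shift x y s = s.
Proof. by case: s => [[[i j] b] w] /negPn/eqP xy_eq; rewrite /oracle_shift /= xy_eq addrK. Qed.

Lemma disagree_shift x y s : disagree x y (oracle_shift x y s) = disagree x y s.
Proof. by case: s => [[[i j] b] w]. Qed.

Lemma dotp_oracle x y psi phi :
  dotp (apply_op (oracle x) psi) (apply_op (oracle y) phi) =
  \sum_s (psi s)^* * phi (oracle_shift x y s).
Proof.
rewrite /dotp (reindex (oracle_map x)) /=; last first.
  by exists (oracle_inv x) => s _; [rewrite oracle_mapK | rewrite oracle_invK].
by apply: eq_bigr => s _; rewrite !apply_oracle oracle_mapK.
Qed.

Lemma mass_oracle_shift x y phi :
  \sum_(s | disagree x y s) sqmod (phi (oracle_shift x y s)) = mass (disagree x y) phi.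
Proof.
rewrite [RHS](reindex (oracle_shift x y)) /=; last first.
  by exists (oracle_shift y x) => s _; rewrite /oracle_shift ?oracle_invK ?oracle_mapK.
by apply: eq_bigl => s; rewrite disagree_shift.
Qed.

Lemma dotp_oracle_sub_le c x y psi phi : 0 < c ->
  modc (dotp (apply_op (oracle x) psi) (apply_op (oracle y) phi) - dotp psi phi)
  <= c * mass (disagree x y) psi + c^-1 * mass (disagree x y) phi.
Proof.
(* Only queries on which [x] and [y] disagree contribute; bound those terms by AM-GM and
   use that [oracle_shift x y] permutes them. *)
move=> c_gt0; rewrite dotp_oracle /dotp -sumrB (bigID (disagree x y)) /=.
rewrite [X in _ + X]big1 ?addr0 => [|s /oracle_shift_id ->]; last by rewrite subrr.
apply: le_trans (@modc_sum _ _ _) _.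
apply: (@le_trans _ _ (\sum_(s | disagree x y s)
   ((c * sqmod (psi s) + c^-1 * sqmod (phi (oracle_shift x y s))) / 2%:R +
    (c * sqmod (psi s) + c^-1 * sqmod (phi s)) / 2%:R))).
  apply: ler_sum => s _; apply: le_trans (ler_normD _ _) _.
  by apply: lerD; rewrite ?normrN; exact: modcJM_le.
rewrite big_split -!mulr_suml !big_split -!mulr_sumr /= mass_oracle_shift /mass; lra.
Qed.

End Oracle.

Lemma sumr1_card (R : pzSemiRingType) (J : finType) (P : pred J) :
  \sum_(j | P j) 1 = #|[set j | P j]|%:R :> R.
Proof. by rewrite -sumr_const; apply: eq_bigl => j; rewrite inE. Qed.

Section Adversary.
Variables (n M W T : nat) (A : query_algorithm n M W T).
Local Notation S := (basis n M W).
Local Notation input := ('I_n -> 'I_n -> 'I_M.+1).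

Definition run (x : input) (k : nat) : state S := run_state (qa_U A) x (qa_init A) k.

Lemma dotp_run x k : (k <= T)%N -> dotp (run x k) (run x k) = 1.
Proof.
elim: k => [|k IHk] k_le; rewrite /run /= (dotp_unitary (qa_unitary A k_le)).
  rewrite /dotp (bigD1 (qa_init A)) //= eqxx conjC_nat mulr1 big1 ?addr0 // => s /negbTE ->.
  exact: mulr0.
by rewrite (dotp_unitary (oracle_unitary x)) IHk // ltnW.
Qed.

Lemma run_normalized x k : (k <= T)%N -> mass predT (run x k) = 1.
Proof. by move=> k_le; apply: complexI; rewrite -dotp_self dotp_run. Qed.

Lemma dotp_run_step c x y k : 0 < c -> (k < T)%N ->
  modc (dotp (run x k) (run y k)) <=
  modc (dotp (run x k.+1) (run y k.+1)) +
  (c * mass (disagree x y) (run x k) + c^-1 * mass (disagree x y) (run y k)).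
Proof.
move=> c_gt0 k_lt; apply: le_trans (modc_le_dist (dotp (run x k.+1) (run y k.+1)) _) _.
by rewrite lerD2l {1 2}/run /= (dotp_unitary (qa_unitary A k_lt)); exact: dotp_oracle_sub_le.
Qed.

Variables (I : finType) (inp : I -> input) (R : rel I).
Hypothesis right_unique : forall x y1 y2 i j, R x y1 -> R x y2 ->
  inp x i j != inp y1 i j -> inp x i j != inp y2 i j -> y1 = y2.
Hypothesis left_unique : forall x1 x2 y i j, R x1 y -> R x2 y ->
  inp x1 i j != inp y i j -> inp x2 i j != inp y i j -> x1 = x2.
Hypothesis separated : forall x y, R x y -> exists G : pred S,
  2%:R / 3%:R <= mass G (run (inp x) T) /\ 2%:R / 3%:R <= mass (predC G) (run (inp y) T).

Definition progress k : RR :=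
  \sum_x \sum_(y | R x y) modc (dotp (run (inp x) k) (run (inp y) k)).

Let pairs : RR := \sum_x \sum_(y | R x y) 1.
Let nX : RR := \sum_x [exists y, R x y]%:R.
Let nY : RR := \sum_y [exists x, R x y]%:R.

Lemma progress0 : progress 0 = pairs.
Proof.
by apply: eq_bigr => x _; apply: eq_bigr => y _; rewrite [run (inp y) 0]/run dotp_run ?modc1.
Qed.

Lemma progressT : progress T <= 19%:R / 20%:R * pairs.
Proof.
rewrite /pairs !mulr_sumr; apply: ler_sum => x _; rewrite mulr_sumr.
apply: ler_sum => y Rxy; rewrite mulr1; have [G [xG yG]] := separated Rxy.
by apply: dotp_separated_le xG yG; exact: run_normalized.
Qed.

Lemma progress_step c k : 0 < c -> (k < T)%N ->
  progress k <= progress k.+1 + (c * nX + c^-1 * nY).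
Proof.
move=> c_gt0 k_lt.
have massX : \sum_x \sum_(y | R x y) mass (disagree (inp x) (inp y)) (run (inp x) k) <= nX.
  apply: ler_sum => x _; apply: sum_mass_disjoint_exists_le; first exact/run_normalized/ltnW.
  by move=> -[[[i j] b] w] y1 y2; exact: right_unique.
have massY : \sum_x \sum_(y | R x y) mass (disagree (inp x) (inp y)) (run (inp y) k) <= nY.
  rewrite (exchange_big_dep predT) //=; apply: ler_sum => y _.
  apply: sum_mass_disjoint_exists_le; first exact/run_normalized/ltnW.
  by move=> -[[[i j] b] w] x1 x2; exact: left_unique.
apply: le_trans (_ : \sum_x \sum_(y | R x y)
    (modc (dotp (run (inp x) k.+1) (run (inp y) k.+1)) +
     (c * mass (disagree (inp x) (inp y)) (run (inp x) k) +
      c^-1 * mass (disagree (inp x) (inp y)) (run (inp y) k))) <= _).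
  by apply: ler_sum => x _; apply: ler_sum => y _; exact: dotp_run_step.
under eq_bigr => x _ do rewrite big_split /= big_split /= -!mulr_sumr.
rewrite big_split /= big_split /= -!mulr_sumr lerD2l.
by apply: lerD; apply: ler_wpM2l => //; rewrite ltW ?invr_gt0.
Qed.

Lemma weighted_adversary c : 0 < c -> pairs <= 20%:R * T%:R * (c * nX + c^-1 * nY).
Proof.
move=> c_gt0; set D := c * nX + c^-1 * nY.
have telescope k : (k <= T)%N -> pairs <= progress k + k%:R * D.
  elim: k => [|k IHk] k_le; first by rewrite progress0 mul0r addr0.
  have := progress_step c_gt0 k_le; have := IHk (ltnW k_le).
  rewrite -natr1 mulrDl mul1r -/D; lra.
have := telescope T (leqnn T); have := progressT; lra.
Qed.

Theorem ambainis_bound (m m' : nat) : (exists x y, R x y) ->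
  (forall x y, R x y -> (m <= #|[set y' | R x y']|)%N) ->
  (forall x y, R x y -> (m' <= #|[set x' | R x' y]|)%N) ->
  Num.sqrt ((m * m')%:R : RR) / 40%:R <= T%:R.
Proof.
move=> [x0 [y0 R0]] degX degY; rewrite ler_pdivrMr ?ltr0n // natrM.
have pairs_gt0 : 0 < pairs.
  rewrite /pairs (bigD1 x0) //= (bigD1 y0) //= -addrA ltr_pwDl ?ltr01 //.
  by rewrite addr_ge0 ?sumr_ge0 // => x _; rewrite sumr_ge0.
have mX : m%:R * nX <= pairs.
  rewrite /pairs /nX mulr_sumr; apply: ler_sum => x _; rewrite sumr1_card.
  case: (boolP [exists y, R x y]) => [/existsP [y Rxy] | _]; last by rewrite mulr0 ler0n.
  by rewrite mulr1 ler_nat (degX _ _ Rxy).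
have mY : m'%:R * nY <= pairs.
  rewrite /pairs (exchange_big_dep predT) //= /nY mulr_sumr; apply: ler_sum => y _.
  rewrite sumr1_card; case: (boolP [exists x, R x y]) => [/existsP [x Rxy] | _].
    by rewrite mulr1 ler_nat (degY _ _ Rxy).
  by rewrite mulr0 ler0n.
case: m {degX} mX => [|m] mX; first by rewrite mul0r sqrtr0 mulr_ge0 ?ler0n.
case: m' {degY} mY => [|m'] mY; first by rewrite mulr0 sqrtr0 mulr_ge0 ?ler0n.
(* The weight [a / b = sqrt (m / m')] balances the two terms of [weighted_adversary]. *)
rewrite sqrtrM ?ler0n //; set a := Num.sqrt _; set b := Num.sqrt _.
have a_gt0 : 0 < a by rewrite sqrtr_gt0 ltr0n.
have b_gt0 : 0 < b by rewrite sqrtr_gt0 ltr0n.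
have balance : a * b * (a / b * nX + (a / b)^-1 * nY) = m.+1%:R * nX + m'.+1%:R * nY.
  rewrite -[m.+1%:R](@sqr_sqrtr _ _ (ler0n _ _)) -[m'.+1%:R](@sqr_sqrtr _ _ (ler0n _ _)).
  by rewrite -/a -/b invf_div; field; rewrite !gt_eqF.
have : a * b * pairs <= T%:R * 40%:R * pairs.
  have ab_ge0 : 0 <= a * b by rewrite ltW ?mulr_gt0.
  apply: le_trans (ler_wpM2l ab_ge0 (weighted_adversary (divr_gt0 a_gt0 b_gt0))) _.
  rewrite mulrCA balance (_ : T%:R * 40%:R * pairs = 20%:R * T%:R * (2%:R * pairs)).
    by apply: ler_wpM2l; [rewrite mulr_ge0 ?ler0n | lra].
  by ring.
by rewrite ler_pM2r.
Qed.



End Adversary.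

Section Matchings.
Variables (n M h : nat).
Local Notation E := ('I_h * 'I_h)%type.
Implicit Types (F x y : {set E}) (e : E) (i j k : 'I_n).

Definition matching F : bool :=
  [forall e in F, forall e' in F, ((e.1 == e'.1) || (e.2 == e'.2)) ==> (e == e')].

Lemma matchingP F e e' : matching F -> e \in F -> e' \in F ->
  e.1 = e'.1 \/ e.2 = e'.2 -> e = e'.
Proof.
move=> /forall_inP /(_ e) F_match eF e'F e_e'; move/forall_inP: (F_match eF) => /(_ e' e'F).
by case: e_e' => ->; rewrite eqxx ?orbT => /implyP /(_ isT) /eqP.
Qed.

Lemma matching_sub F F' : F \subset F' -> matching F' -> matching F.
Proof.
move=> /subsetP F_F' F'_match; apply/forall_inP => e eF; apply/forall_inP => e' e'F.
apply/implyP => /orP e_e'; apply/eqP; apply: (matchingP F'_match); rewrite ?F_F' //.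
by case: e_e' => /eqP; [left | right].
Qed.

Lemma matching_setU1 F e : matching F ->
  e.1 \notin [set f.1 | f in F] -> e.2 \notin [set f.2 | f in F] -> matching (e |: F).
Proof.
move=> F_match e1_fresh e2_fresh.
have fresh f : f \in F -> e.1 = f.1 \/ e.2 = f.2 -> False.
  move=> fF [] e_f; [move: e1_fresh | move: e2_fresh]; rewrite e_f.
    by rewrite (imset_f (fun f : E => f.1) fF).
  by rewrite (imset_f (fun f : E => f.2) fF).
apply/forall_inP => f; rewrite in_setU1 => /orP[/eqP -> | fF].
  apply/forall_inP => f'; rewrite in_setU1 => /orP[/eqP -> | f'F]; first by apply/implyP.
  by apply/implyP => /orP e_f'; case: (fresh f' f'F); case: e_f' => /eqP; [left | right].
apply/forall_inP => f'; rewrite in_setU1 => /orP[/eqP -> | f'F]; apply/implyP => /orP f_f'.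
  by case: (fresh f fF); case: f_f' => /eqP; [left | right].
by apply/eqP; apply: (matchingP F_match) => //; case: f_f' => /eqP; [left | right].
Qed.

(* The edge [(a, b)] joins the point [a] of the left half to the point [h + b] of the
   right half. *)
Definition joins e i j : bool :=
  ((i == e.1 :> nat) && (j == h + e.2 :> nat)) || ((j == e.1 :> nat) && (i == h + e.2 :> nat)).

Lemma joinsC e i j : joins e i j = joins e j i.
Proof. by rewrite /joins orbC. Qed.

Lemma joins_neq e i j : joins e i j -> i != j.
Proof.
have := ltn_ord e.1.
by rewrite /joins => e1_lt /orP[] /andP[/eqP i_eq /eqP j_eq]; apply/eqP => ij; subst; lia.
Qed.

Lemma joins_inj e e' i j : joins e i j -> joins e' i j -> e = e'.
Proof.
case: e e' => [a b] [a' b']; have := ltn_ord a; have := ltn_ord a'.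
rewrite /joins /= => a'_lt a_lt.
by move=> /orP[] /andP[/eqP eq1 /eqP eq2] /orP[] /andP[/eqP eq3 /eqP eq4];
  try lia; congr (_, _); apply: ord_inj; lia.
Qed.

Definition near F i j : bool := [exists e in F, joins e i j].

Lemma nearC F i j : near F i j = near F j i.
Proof. by apply: eq_existsb => e; rewrite joinsC. Qed.

Lemma near_sub F F' i j : F \subset F' -> near F i j -> near F' i j.
Proof.
by move=> /subsetP F_F' /exists_inP[e eF e_ij]; apply/exists_inP; exists e; rewrite ?F_F'.
Qed.

Lemma matching_near2 F i j k : matching F -> near F i j -> near F j k -> i = k.
Proof.
move=> F_match /exists_inP[[a b] eF e_ij] /exists_inP[[a' b'] e'F e'_jk].
have := matchingP F_match eF e'F; have := ltn_ord a; have := ltn_ord a'.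
move: e_ij e'_jk; rewrite /joins /=.
move=> /orP[] /andP[/eqP eq1 /eqP eq2] /orP[] /andP[/eqP eq3 /eqP eq4] a'_lt a_lt e_e';
  try lia; apply: ord_inj.
(* [j] is an endpoint of both edges, on the same side, so the edges coincide. *)
- have [a_eq b_eq] : (a, b) = (a', b') by apply: e_e'; right; apply: ord_inj; lia.
  by subst a' b'; lia.
- have [a_eq b_eq] : (a, b) = (a', b') by apply: e_e'; left; apply: ord_inj; lia.
  by subst a' b'; lia.
Qed.

Hypothesis M_gt0 : (0 < M)%N.

Definition matching_metric F i j : 'I_M.+1 :=
  if i == j then ord0 else if near F i j then inord 1 else ord_max.

Lemma matching_metricE F i j :
  (matching_metric F i j : nat) = if i == j then 0%N else if near F i j then 1%N else M.
Proof.
by rewrite /matching_metric; case: (i == j) => //; case: near => //; rewrite inordK.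
Qed.

Lemma matching_metric_is_metric F : matching F -> is_metric (matching_metric F).
Proof.
move=> F_match; split; [|split].
- move=> i j; rewrite matching_metricE; case: (i == j) => //.
  by case: near; rewrite // eqn0Ngt M_gt0.
- by move=> i j; rewrite /matching_metric eq_sym nearC.
move=> i j k; rewrite !matching_metricE.
have [-> | ik] := eqVneq i k; first by [].
have [<- | ij] := eqVneq i j; first by rewrite add0n (negbTE ik).
have [<- | _] := eqVneq j k; first by rewrite addn0 ?(negbTE ij) ?(negbTE ik).
case ij_near: (near F i j); case jk_near: (near F j k); case: (near F i k); try lia.
by move: ik; rewrite (matching_near2 F_match ij_near jk_near) eqxx.
Qed.

Variable s : nat.

Definition extends x y : bool :=
  [&& matching x, #|x| == s, matching y, #|y| == s.+1 & x \subset y].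

Lemma extends_new_edge x y i j : extends x y ->
  matching_metric x i j != matching_metric y i j ->
  exists e, [/\ e \in y, e \notin x & joins e i j].
Proof.
case/and5P => _ _ _ _ x_y; rewrite /matching_metric; case: (i == j); first by rewrite eqxx.
case x_near: (near x i j); first by rewrite (near_sub x_y x_near) eqxx.
case/boolP: (near y i j) => [/exists_inP[e ey e_ij] _ | _]; last by rewrite eqxx.
exists e; split => //; apply: contraFN x_near => ex.
by apply/exists_inP; exists e.
Qed.

Lemma extends_setU1 x y e : extends x y -> e \in y -> e \notin x -> y = e |: x.
Proof.
case/and5P => _ /eqP x_card _ /eqP y_card x_y ey ex; apply/eqP; rewrite eq_sym eqEcard.
by rewrite subUset sub1set ey x_y cardsU1 ex x_card y_card add1n ltnSn.
Qed.

Lemma extends_setD1 x y e : extends x y -> e \in y -> e \notin x -> x = y :\ e.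
Proof.
by move=> xy ey ex; rewrite (extends_setU1 xy ey ex) setU1K.
Qed.

Lemma extends_right_unique x y1 y2 i j : extends x y1 -> extends x y2 ->
  matching_metric x i j != matching_metric y1 i j ->
  matching_metric x i j != matching_metric y2 i j -> y1 = y2.
Proof.
move=> xy1 xy2 /(extends_new_edge xy1)[e1 [e1y e1x e1_ij]].
move=> /(extends_new_edge xy2)[e2 [e2y e2x e2_ij]].
by rewrite (extends_setU1 xy1 e1y e1x) (extends_setU1 xy2 e2y e2x) (joins_inj e1_ij e2_ij).
Qed.

Lemma extends_left_unique x1 x2 y i j : extends x1 y -> extends x2 y ->
  matching_metric x1 i j != matching_metric y i j ->
  matching_metric x2 i j != matching_metric y i j -> x1 = x2.
Proof.
move=> x1y x2y /(extends_new_edge x1y)[e1 [e1y e1x e1_ij]].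
move=> /(extends_new_edge x2y)[e2 [e2y e2x e2_ij]].
by rewrite (extends_setD1 x1y e1y e1x) (extends_setD1 x2y e2y e2x) (joins_inj e1_ij e2_ij).
Qed.

Lemma card_extends_left x y : extends x y -> (s.+1 <= #|[set x' | extends x' y]|)%N.
Proof.
case/and5P => _ _ y_match /eqP y_card _.
have D1_inj : {in y &, injective (fun e => y :\ e)}.
  move=> e1 e2 e1y _ D1_eq; apply/eqP; apply: contraT => e12.
  by move: (setD11 e1 y); rewrite D1_eq !inE e12 e1y.
rewrite -y_card -(card_in_imset D1_inj); apply/subset_leq_card/subsetP => _ /imsetP[e ey ->].
have [e_nD1 D1_card] : e \notin y :\ e /\ #|y :\ e| = s.
  by split; [rewrite setD11 | apply/eqP; rewrite -eqSS -y_card (cardsD1 e y) ey].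
by rewrite inE /extends (matching_sub (subD1set y e)) // D1_card y_match y_card subD1set !eqxx.
Qed.

Lemma card_extends_right x : matching x -> #|x| = s ->
  ((h - s) ^ 2 <= #|[set y | extends x y]|)%N.
Proof.
move=> x_match x_card; set F1 := ~: [set e.1 | e in x]; set F2 := ~: [set e.2 | e in x].
have card_free (f : E -> 'I_h) : {in x &, injective f} -> #|~: [set f e | e in x]| = (h - s)%N.
  by move=> f_inj; rewrite cardsCs setCK card_ord card_in_imset ?x_card.
have F1_card : #|F1| = (h - s)%N.
  by apply: card_free => e e' ex e'x e_e'; apply: (matchingP x_match) => //; left.
have F2_card : #|F2| = (h - s)%N.
  by apply: card_free => e e' ex e'x e_e'; apply: (matchingP x_match) => //; right.
have fresh e : e \in setX F1 F2 -> e \notin x.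
  rewrite !inE => /andP[e1_free _]; apply: contraNN e1_free => ex.
  exact: (imset_f (fun e : E => e.1) ex).
have U1_inj : {in setX F1 F2 &, injective (fun e => e |: x)}.
  move=> e e' eF _ U1_eq; have : e \in e' |: x by rewrite -U1_eq setU11.
  by rewrite in_setU1 (negbTE (fresh e eF)) orbF => /eqP.
rewrite -mulnn -{1}F1_card -F2_card -cardsX -(card_in_imset U1_inj).
apply/subset_leq_card/subsetP => _ /imsetP[e eF ->].
rewrite inE /extends x_match x_card subsetUr cardsU1 (fresh e eF) x_card !eqxx /= andbT.
by move: eF; rewrite !inE => /andP[e1_free e2_free]; exact: matching_setU1.
Qed.

Lemma extends_exists : (s < h)%N -> exists x y, extends x y.
Proof.
move=> s_lt; pose widen := widen_ord (ltnW s_lt); pose diag a : E := (widen a, widen a).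
have widen_inj : injective widen by move=> a a' [] /ord_inj.
have diag_inj : injective diag by move=> a a' [] /ord_inj.
have x_match : matching [set diag a | a : 'I_s].
  apply/forall_inP => _ /imsetP[a _ ->]; apply/forall_inP => _ /imsetP[a' _ ->].
  by apply/implyP => /orP[] /eqP eq_a; rewrite (widen_inj _ _ eq_a).
have x_card : #|[set diag a | a : 'I_s]| = s by rewrite card_imset ?card_ord.
have hs_gt0 : (0 < (h - s) ^ 2)%N by rewrite expn_gt0 subn_gt0 s_lt.
case/card_gt0P: (leq_trans hs_gt0 (card_extends_right x_match x_card)) => y; rewrite inE => xy.
by exists [set diag a | a : 'I_s], y.
Qed.

Lemma extends_witness x y : (h + h <= n)%N -> extends x y ->
  exists i j, (matching_metric y i j : nat) = 1%N /\ (matching_metric x i j : nat) = M.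
Proof.
move=> hh_le xy; case/and5P: (xy) => _ /eqP x_card _ /eqP y_card _.
have [e ey ex] : exists2 e, e \in y & e \notin x.
  by apply/subsetPn; apply: contraTN isT => /subset_leq_card; rewrite x_card y_card ltnn.
have e1_lt : (e.1 < n)%N by have := ltn_ord e.1; lia.
have e2_lt : (h + e.2 < n)%N by have := ltn_ord e.2; lia.
have e_ij : joins e (Ordinal e1_lt) (Ordinal e2_lt) by rewrite /joins /= !eqxx.
exists (Ordinal e1_lt), (Ordinal e2_lt); rewrite !matching_metricE (negbTE (joins_neq e_ij)).
have -> : near y (Ordinal e1_lt) (Ordinal e2_lt) by apply/exists_inP; exists e.
suff -> : near x (Ordinal e1_lt) (Ordinal e2_lt) = false by [].
by apply: contraNF ex => /exists_inP[e' e'x /joins_inj /(_ e_ij) <-].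
Qed.

End Matchings.

Lemma approximates_excl n M alpha (d d' : 'I_n -> 'I_n -> 'I_M.+1) (X : 'M[RR]_n) i j :
  alpha * (d i j : nat)%:R < (d' i j : nat)%:R ->
  approximates alpha d X -> ~ approximates alpha d' X.
Proof.
move=> d_lt dX d'X; have [_ X_le] := dX i j; have [le_X _] := d'X i j.
by move: d_lt; rewrite ltNge (le_trans le_X X_le).
Qed.

Lemma matching_lower_bound n M W T alpha h s (A : query_algorithm n M W T) :
  (0 < M)%N -> alpha < M%:R -> (s < h)%N -> (h + h <= n)%N ->
  estimates_within alpha A -> Num.sqrt (((h - s) ^ 2 * s.+1)%:R : RR) / 40%:R <= T%:R.
Proof.
move=> M_gt0 alpha_lt s_lt hh_le A_est.
have metric x : matching x -> is_metric (@matching_metric n M h x).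
  exact: matching_metric_is_metric.
apply: (ambainis_bound (inp := @matching_metric n M h) (R := extends s)).
- exact: extends_right_unique.
- exact: extends_left_unique.
- move=> x y /[dup] xy /and5P[x_match _ y_match _ _].
  exists (fun t => `[< approximates alpha (matching_metric M x) (qa_out A t) >]).
  split; first exact: A_est (metric x x_match).
  apply: le_trans (A_est _ (metric y y_match)) _; apply: mass_sub => t /asboolP y_approx.
  apply/asboolP; have [i [j [y1 xM]]] := extends_witness M_gt0 hh_le xy.
  by apply: (approximates_excl (i := i) (j := j) _ y_approx); rewrite y1 xM mulr1.
- exact: extends_exists.
- by move=> x y /and5P[x_match /eqP x_card _ _ _]; exact: card_extends_right.
- by move=> x y; exact: card_extends_left.
Qed.

Lemma matching_count_cube n : (2 <= n)%N ->
  (n ^ 3 <= 512 * ((n./2 - n./2./2) ^ 2 * (n./2./2).+1))%N.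
Proof.
move=> n_ge2; have := odd_double_half n; have := odd_double_half n./2.
rewrite -!addnn => h_eq n_eq.
have le_left : (n <= 8 * (n./2 - n./2./2))%N by lia.
have le_right : (n <= 8 * (n./2./2).+1)%N by lia.
rewrite (_ : n ^ 3 = n * n * n)%N; last by ring.
by apply: leq_trans (leq_mul (leq_mul le_left le_left) le_right) _; apply: eq_leq; ring.
Qed.

Lemma sqrt_cube_le n K : (n ^ 3 <= 512 * K)%N ->
  1000%:R^-1 * Num.sqrt (n%:R ^+ 3 : RR) <= Num.sqrt (K%:R : RR) / 40%:R.
Proof.
move=> cube_le; have : Num.sqrt (n%:R ^+ 3 : RR) <= Num.sqrt (25%:R ^+ 2 * K%:R).
  rewrite ler_sqrt ?mulr_ge0 ?ler0n // -!natrX -natrM ler_nat.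
  by apply: leq_trans cube_le _; apply: leq_mul.
rewrite sqrtrM ?sqr_ge0 // sqrtr_sqr ger0_norm ?ler0n //; lra.
Qed.

Theorem mainTheorem11 :
  forall alpha : RR, 1 <= alpha ->
  exists c : RR, 0 < c /\
  exists N0 : nat, forall n : nat, (N0 <= n)%N ->
  exists M : nat, forall (W T : nat) (A : query_algorithm n M W T),
    estimates_within alpha A ->
    c * Num.sqrt ((n : nat)%:R ^+ 3) <= (T : nat)%:R.
Proof.
move=> alpha alpha_ge1; exists 1000%:R^-1; split; first by rewrite invr_gt0 ltr0n.
exists 2%N => n n_ge2; pose M := (Num.Def.archi_bound alpha).+1.
have alpha_lt : alpha < M%:R.
  by apply: lt_le_trans (archi_boundP (le_trans ler01 alpha_ge1)) _; rewrite ler_nat.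
exists M => W T A A_est; have := odd_double_half n; rewrite -addnn => n_eq.
apply: le_trans (sqrt_cube_le (matching_count_cube n_ge2)) _.
by apply: (matching_lower_bound _ alpha_lt _ _ A_est); lia.
Qed.
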